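(* Let $M_{1/2} := \mathbb{N}_0[\frac12]$. A nonzero element $P(x) \in \mathbb{Q}[M_{1/2}]$ is irreducible in $\mathbb{Q}[M_{1/2}]$ if and only if $P(x^{2^n})$ is irreducible in $\mathbb{Q}[x]$ for every $n \in \mathbb{N}$ such that $P(x^{2^n}) \in \mathbb{Q}[x]$.
   Context: $\mathbb{Q}[M_{1/2}]$ is the domain of polynomial expressions $\sum c_i x^{m_i}$ with $c_i \in \mathbb{Q}$ and $m_i$ nonnegative dyadic rationals; $P(x^{2^n})$ denotes the expression obtained by replacing each $x^{m}$ by $x^{2^n m}$. *)

From mathcomp Require Import all_boot all_algebra.
Set Implicit Arguments. Unset Strict Implicit. Unset Printing Implicit Defensive.
Import GRing.Theory Num.Theory.
Local Open Scope ring_scope.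

(* Model of Q[M_{1/2}], M_{1/2} = N_0[1/2] (nonnegative dyadic rationals):
   a representative (k, p) with p : {poly rat} denotes the expression
   p(x^{1/2^k}).  Q[M_{1/2}] is the directed union of the Q[x^{1/2^k}],
   and the ring operations below are those of this union. *)
Definition dpoly := (nat * {poly rat})%type.

Definition stretch (m : nat) (p : {poly rat}) : {poly rat} := p \Po 'X^(2 ^ m).

(* equality of the denoted elements: p(x^{1/2^a}) = q(x^{1/2^b}) *)
Definition deq (P Q : dpoly) : Prop :=
  stretch Q.1 P.2 = stretch P.1 Q.2.

Definition dmul (P Q : dpoly) : dpoly :=
  ((P.1 + Q.1)%N, stretch Q.1 P.2 * stretch P.1 Q.2).

Definition done : dpoly := (0%N, 1).

Definition dnonzero (P : dpoly) : Prop := P.2 != 0.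

Definition dunit (P : dpoly) : Prop := exists Q, deq (dmul P Q) done.

Definition dirreducible (P : dpoly) : Prop :=
  dnonzero P /\ ~ dunit P /\
  forall Q R : dpoly, deq P (dmul Q R) -> dunit Q \/ dunit R.

Definition dsubst (n : nat) (P : dpoly) : dpoly := (P.1, stretch n P.2).

Definition ofpoly (q : {poly rat}) : dpoly := (0%N, q).

From mathcomp Require Import all_boot all_algebra.
From mathcomp Require Import zify.

Set Implicit Arguments.
Unset Strict Implicit.
Unset Printing Implicit Defensive.

Import GRing.Theory.
Local Open Scope ring_scope.

(* Stretching p(x) |-> p(x^(2^m)) is an injective ring endomorphism of Q[x]
   that multiplies degrees by 2^m, so it sends constants, and only constants,
   to constants.  Hence the units of Q[M_{1/2}] are the nonzero constants, and
   a factorization of P = p(x^(1/2^k)) in Q[M_{1/2}] has both factors in some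
   Q[x^(1/2^m)]: after the substitution x |-> x^(2^m) it becomes a
   factorization in Q[x], and conversely every factorization of a polynomial
   P(x^(2^n)) in Q[x] is one of P in Q[M_{1/2}]. *)

Lemma irredp_mul_size1 (R : idomainType) (f g : {poly R}) :
  irreducible_poly (f * g) -> size f = 1%N \/ size g = 1%N.
Proof.
move=> irr_fg; have fg0 := irredp_neq0 irr_fg.
have [f0 g0] : f != 0 /\ g != 0 by apply/andP; rewrite -negb_or -mulf_eq0.
have [/eqP|f_n1] := boolP (size f == 1%N); first by left.
right; have /eqp_size := apply_irredp irr_fg f_n1 (dvdp_mulr _ (dvdpp f)).
rewrite size_mul //; move: f0 g0; rewrite -!size_poly_eq0.
by case: (size f) => // a; case: (size g) => // b _ _; lia.
Qed.

Lemma irredp_of_factors (F : fieldType) (q : {poly F}) :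
  (1 < size q)%N ->
  (forall f g : {poly F}, q = f * g -> size f = 1%N \/ size g = 1%N) ->
  irreducible_poly q.
Proof.
move=> q_gt1 factors; split=> // d d_n1 /dvdpP[g def_q].
have [/eqP/size_poly1P[c c0 g_c]|d1] := factors g d def_q; last first.
  by move/eqP: d_n1.
by rewrite def_q g_c mul_polyC eqp_sym eqp_scale.
Qed.

Lemma stretch0 p : stretch 0 p = p.
Proof. by rewrite /stretch expn0 expr1 comp_polyXr. Qed.

Lemma stretchC m c : stretch m c%:P = c%:P.
Proof. exact: comp_polyC. Qed.

Lemma stretchM m f g : stretch m (f * g) = stretch m f * stretch m g.
Proof. exact: comp_polyM. Qed.

Lemma stretch_add a b p : stretch a (stretch b p) = stretch (a + b) p.
Proof. by rewrite /stretch -comp_polyA comp_Xn_poly -exprM -expnD addnC. Qed.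

Lemma size_stretch m p : (size (stretch m p)).-1 = ((size p).-1 * 2 ^ m)%N.
Proof. by rewrite /stretch size_comp_poly size_polyXn. Qed.

Lemma stretch_eq0 m p : (stretch m p == 0) = (p == 0).
Proof. by rewrite comp_poly_eq0 // size_polyXn ltnS expn_gt0. Qed.

Lemma size_stretch_eq1 m p : (size (stretch m p) == 1%N) = (size p == 1%N).
Proof.
have [->|p0] := eqVneq p 0; first by rewrite /stretch comp_poly0.
have p_gt0 : (0 < size p)%N by rewrite size_poly_gt0.
have sp_gt0 : (0 < size (stretch m p))%N by rewrite size_poly_gt0 stretch_eq0.
rewrite -(prednK p_gt0) -(prednK sp_gt0) !eqSS.
by rewrite size_stretch muln_eq0 expn_eq0 orbF.
Qed.

Lemma dunitP P : dunit P <-> size P.2 = 1%N.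
Proof.
case: P => a f /=; split.
- case=> [[b g]]; rewrite /deq /dmul /done /= stretch0 stretchC => fg1.
  have : stretch b f \is a GRing.unit.
    by apply/unitrP; exists (stretch a g); rewrite mulrC fg1.
  by rewrite poly_unitE size_stretch_eq1 => /andP[/eqP].
- move/eqP/size_poly1P => [c c0 ->].
  exists (0%N, c^-1%:P); rewrite /deq /dmul /done /= stretch0 !stretchC.
  by rewrite -polyCM mulfV.
Qed.

Lemma deq_dsubst_ofpoly n P q :
  deq (dsubst n P) (ofpoly q) = (stretch n P.2 = stretch P.1 q).
Proof. by rewrite /deq /= stretch0. Qed.

Lemma irredp_of_dirreducible k n p q :
  dirreducible (k, p) -> stretch n p = stretch k q -> irreducible_poly q.
Proof.
case=> p0 [P_nunit P_factors] def_q.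
apply: irredp_of_factors => [|f g q_fg].
- have q0 : q != 0 by rewrite -(stretch_eq0 k) -def_q stretch_eq0.
  rewrite ltnNge; apply: contra_notN P_nunit => q_le1; apply/dunitP/eqP => /=.
  rewrite -(size_stretch_eq1 n) def_q size_stretch_eq1.
  by rewrite eqn_leq q_le1 size_poly_gt0.
- have : deq (k, p) (dmul (n, f) (n, g)).
    by rewrite /deq /= -stretchM -q_fg -[LHS]stretch_add def_q !stretch_add addnC.
  by case/P_factors => /dunitP; [left | right].
Qed.

Lemma dirreducible_of_irredp k p :
  p != 0 ->
  (forall n q, stretch n p = stretch k q -> irreducible_poly q) ->
  dirreducible (k, p).
Proof.
move=> p0 irr_subst; split=> //; split.
- move/dunitP => /= p1.
  by have [] := irr_subst k p erefl; rewrite p1.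
- move=> [a f] [b g]; rewrite /deq /dmul /= => def_p.
  have [] := irredp_mul_size1 (irr_subst _ _ def_p) => /eqP;
    rewrite size_stretch_eq1 => /eqP unit_factor; [left | right];
    exact/dunitP.
Qed.

Theorem lemma4p1 (P : dpoly) :
  dnonzero P ->
  (dirreducible P <->
   forall (n : nat) (q : {poly rat}),
     deq (dsubst n P) (ofpoly q) -> irreducible_poly q).
Proof.
case: P => k p p0; split=> [P_irr n q | irr_subst].
- by rewrite deq_dsubst_ofpoly; exact: irredp_of_dirreducible.
- apply: dirreducible_of_irredp => // n q def_q.
  by apply: (irr_subst n q); rewrite deq_dsubst_ofpoly.
Qed.
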